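(* Let $1\le k<n$ and let $X$ be a fixed real $n\times k$ matrix of full column rank $k$. Let $\mathbf{F}_2^0$ be the class of all distributions $F$ of $Y=X\beta+e$ in $\mathbb{R}^n$, where $\beta$ ranges over $\mathbb{R}^k$ and the distribution of $e$ ranges over all distributions on $\mathbb{R}^n$ with $Ee=0$ and $Eee'=\sigma^2 I_n$ for some $0<\sigma^2<\infty$. Consider an estimator of the form $$\hat\beta=AY+(Y'H_1Y,\dots,Y'H_kY)'$$ where $A$ is a real $k\times n$ matrix with $AX=I_k$ and $H_1,\dots,H_k$ are real $n\times n$ matrices with $\operatorname{tr}(H_j)=0$ and $X'H_jX=0$ for $j=1,\dots,k$. Suppose $E_F(\|\hat\beta\|^2)<\infty$ for every $F\in\mathbf{F}_2^0$. Then $\hat\beta$ is a linear estimator, i.e., $\hat\beta=BY$ for some (non-random) real $k\times n$ matrix $B$.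
   Context: $E_F$ denotes expectation when $Y$ has distribution $F$; $\|\cdot\|$ is the Euclidean norm. *)

From HB Require Import structures.
From mathcomp Require Import all_boot all_order all_algebra.
From mathcomp Require Import all_classical all_reals all_analysis.
Set Implicit Arguments. Unset Strict Implicit. Unset Printing Implicit Defensive.
Import Order.TTheory GRing.Theory Num.Theory.
Local Open Scope ring_scope.

Definition sqnorm (R : realType) (m : nat) (v : 'cV[R]_m) : R :=
  \sum_(i < m) (v i ord0) ^+ 2.

Definition qform (R : realType) (n : nat) (H : 'M[R]_n) (y : 'cV[R]_n) : R :=
  (y^T *m H *m y) ord0 ord0.

Definition betahat (R : realType) (n k : nat) (A : 'M[R]_(k, n))
  (H : 'I_k -> 'M[R]_n) (y : 'cV[R]_n) : 'cV[R]_k :=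
  A *m y + \col_(j < k) qform (H j) y.

Definition white_noise (R : realType) (d : measure_display) (T : measurableType d)
  (P : probability T R) (n : nat) (e : T -> 'cV[R]_n) (s2 : R) : Prop :=
  (forall i : 'I_n, measurable_fun setT (fun t => e t i ord0)) /\
  (forall i : 'I_n, P.-integrable setT (fun t => (e t i ord0)%:E)) /\
  (forall i : 'I_n, (\int[P]_t (e t i ord0)%:E = 0)%E) /\
  (forall i j : 'I_n,
      P.-integrable setT (fun t => (e t i ord0 * e t j ord0)%:E) /\
      (\int[P]_t (e t i ord0 * e t j ord0)%:E = (if i == j then s2 else 0)%:E)%E).

(* If some quadratic form [y' H_j y] does not vanish identically, pick [v] with
   [v' H_j v <> 0] and let [u = v / |v|].  Take the noise [e = 2^L D], where [L]
   is geometric with [P(L = l) = (7/8) 8^-l] and [D] is independent of [L] and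
   uniform on the [2n] vectors [+/- q_c], the columns of an orthogonal matrix
   whose first column is [u].  Then [E e = 0] and [E e e' = (E 4^L / n) I] with
   [E 4^L = 7/4], so [e] is admissible, while on the event [D = +/- u] the
   [j]-th coordinate of [betahat] is [+/- 2^L a + 4^L g] with [g = u' H_j u <> 0].
   Choosing the sign of [u] so that the two terms do not cancel, the risk is at
   least a constant times [E 16^L = +oo].  Hence every quadratic part of
   [betahat] vanishes and [betahat = A Y]. *)

From HB Require Import structures.
From mathcomp Require Import all_boot all_order all_algebra.
From mathcomp Require Import all_classical all_reals all_analysis.
From mathcomp Require Import ring lra.
Set Implicit Arguments. Unset Strict Implicit. Unset Printing Implicit Defensive.
Import Order.TTheory GRing.Theory Num.Theory.
Import numFieldNormedType.Exports.
Local Open Scope classical_set_scope.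
Local Open Scope ring_scope.

Lemma eseries_EFin (R : realType) (u : nat -> R) (S : R) :
  series u @ \oo --> S -> (\sum_(l <oo) (u l)%:E = S%:E)%E.
Proof.
move=> uS; have -> : (fun n => \sum_(0 <= l < n) (u l)%:E)%E = EFin \o series u.
  by apply/funext => n; rewrite /= /series /= sumEFin.
by rewrite EFin_lim ?(cvg_lim _ uS) //; apply/cvg_ex; exists S.
Qed.

Lemma exists_gt_pow2 (R : realType) (x c : R) : 0 < c -> exists l, x < c * 2 ^+ l.
Proof.
move=> c0; exists (Num.truncn (x / c)).+1; rewrite mulrC -ltr_pdivrMr //.
apply: lt_le_trans (truncnS_gt _) _.
by rewrite -natrX ler_nat ltnW // ltn_expl.
Qed.

(* [sum_l geom_weight l * c ^+ l] is finite exactly when [|c| < 8]: the power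
   [2^L] of a variable [L] with this law has finite second but infinite fourth
   moment. *)
Definition geom_weight (R : realType) (l : nat) : R := 7 / 8 * 8^-1 ^+ l.

Lemma geom_weight_ge0 (R : realType) l : 0 <= geom_weight R l.
Proof. by rewrite mulr_ge0 // exprn_ge0. Qed.

Lemma geom_weight_series (R : realType) (c : R) : `|c| < 8 ->
  series (fun l => geom_weight R l * c ^+ l) @ \oo --> 7 / (8 - c).
Proof.
move=> c8; have c8' : 8 - c != 0 by rewrite subr_eq0 gt_eqF // (le_lt_trans (ler_norm c)).
have -> : 7 / (8 - c) = 7 / 8 * (1 - c / 8)^-1 by field.
have -> : (fun l => geom_weight R l * c ^+ l) = geometric (7 / 8) (c / 8).
  by apply/funext => l; rewrite /geom_weight /geometric /= exprMn; ring.
by apply: cvg_geometric_series; rewrite normrM [`|8^-1|]ger0_norm //; lra.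
Qed.

Lemma geom_weight_mul16 (R : realType) l : geom_weight R l * 16 ^+ l = 7 / 8 * 2 ^+ l.
Proof.
rewrite /geom_weight -[_ * 16 ^+ l]mulrA -exprMn.
by congr (_ * _ ^+ _); rewrite (_ : 16 = 8 * 2) ?mulKf // -natrM.
Qed.

Section block_geometric.
Variables (R : realType) (N' : nat).
Local Notation N := N'.+1.

Let block_weight_ge0 l : 0 <= geom_weight R l / N%:R.
Proof. by rewrite divr_ge0 ?geom_weight_ge0. Qed.

(* The point [l * N + k], [k < N], encodes the pair [(l, k)]: [l] has law
   [geom_weight] and [k] is independent of it and uniform on [0, N). *)
Definition block_geometric : set nat -> \bar R :=
  mseries (fun l => mscale (NngNum (block_weight_ge0 l))
                           (msum (fun k => \d_(l * N + k)%N) N)) 0.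

HB.instance Definition _ := Measure.on block_geometric.

Lemma ge0_integral_block_geometric (f : nat -> \bar R) : (forall m, 0 <= f m)%E ->
  (\int[block_geometric]_m f m =
   \sum_(l <oo) (geom_weight R l / N%:R)%:E * \sum_(k < N) f (l * N + k)%N)%E.
Proof.
move=> f0; rewrite ge0_integral_measure_series //; apply: eq_eseriesr => l _.
rewrite ge0_integral_mscale // ge0_integral_measure_sum //; congr (_ * _)%E.
by apply: eq_bigr => k _; rewrite integral_dirac // diracT mul1e.
Qed.

Lemma integral_block_geometric_ge0 (a h : nat -> R) (S : R) :
  (forall l, 0 <= a l) -> (forall k, 0 <= h k) ->
  series (fun l => geom_weight R l * a l) @ \oo --> S ->
  (\int[block_geometric]_m (a (m %/ N)%N * h (m %% N)%N)%:E =
   (S * (\sum_(k < N) h k) / N%:R)%:E)%E.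
Proof.
move=> a0 h0 aS; rewrite ge0_integral_block_geometric => [|m]; last first.
  by rewrite lee_fin mulr_ge0.
transitivity (\sum_(l <oo) (geom_weight R l * a l * ((\sum_(k < N) h k) / N%:R))%:E)%E.
  apply: eq_eseriesr => l _ /=.
  rewrite (eq_bigr (fun k : 'I_N => (a l * h k)%:E)) => [|k _]; last first.
    by rewrite divnMDl // modnMDl (divn_small (ltn_ord k)) (modn_small (ltn_ord k)) addn0.
  by rewrite sumEFin -EFinM -mulr_sumr; congr EFin; ring.
rewrite -mulrA; apply: (@eseries_EFin _ (fun l => _ * _)).
under [series _]funext => n do rewrite /series /= -mulr_suml.
exact: cvgMr_tmp.
Qed.

Lemma block_geometric_integrable (a g : nat -> R) (S : R) :
  (forall l, 0 <= a l) -> series (fun l => geom_weight R l * a l) @ \oo --> S ->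
  block_geometric.-integrable setT (fun m => (a (m %/ N)%N * g (m %% N)%N)%:E).
Proof.
move=> a0 aS; apply/integrableP; split => //.
under eq_integral => m _ do rewrite /= normrM (ger0_norm (a0 _)).
by rewrite (integral_block_geometric_ge0 a0 (fun k => normr_ge0 (g k)) aS) ltry.
Qed.

Lemma integral_block_geometric (a g : nat -> R) (S : R) :
  (forall l, 0 <= a l) -> series (fun l => geom_weight R l * a l) @ \oo --> S ->
  (\int[block_geometric]_m (a (m %/ N)%N * g (m %% N)%N)%:E =
   (S * (\sum_(k < N) g k) / N%:R)%:E)%E.
Proof.
move=> a0 aS.
have gE k : g k = g^\+ k - g^\- k by rewrite -[in LHS](funrposBneg g).
under eq_integral => m _ do rewrite gE mulrBr EFinB.
rewrite integralB_EFin //; try exact: block_geometric_integrable aS.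
rewrite !(integral_block_geometric_ge0 a0 _ aS) => [|k|k]; last 2 first.
- exact: funrneg_ge0.
- exact: funrpos_ge0.
by rewrite -EFinB -!mulrA -mulrBr -mulrBl -sumrB; under eq_bigr do rewrite -gE.
Qed.

Lemma block_geometric_setT : block_geometric setT = 1%E.
Proof.
have mass : series (fun l => geom_weight R l * 1) @ \oo --> (1 : R).
  have := @geom_weight_series R 1; rewrite normr1 ltr1n => /(_ isT).
  have -> : 7 / (8 - 1) = 1 :> R by field.
  by under eq_fun do rewrite expr1n.
transitivity (\int[block_geometric]_m ((1 : R) * 1)%:E)%E.
  by rewrite -[LHS]mul1e -integral_cst //; apply: eq_integral => m _; rewrite mulr1.
rewrite (integral_block_geometric (fun _ => 1) (fun=> ler01) mass).
by rewrite sumr_const card_ord mul1r divff // pnatr_eq0.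
Qed.

HB.instance Definition _ :=
  Measure_isProbability.Build _ _ _ block_geometric block_geometric_setT.

Lemma block_geometric_ge_term (f : nat -> \bar R) l (k : 'I_N) :
  (forall m, 0 <= f m)%E ->
  ((geom_weight R l / N%:R)%:E * f (l * N + k)%N <= \int[block_geometric]_m f m)%E.
Proof.
move=> f0; rewrite ge0_integral_block_geometric //.
have term_ge0 i : (0 <= (geom_weight R i / N%:R)%:E * \sum_(k < N) f (i * N + k)%N)%E.
  by rewrite mule_ge0 ?sume_ge0 // lee_fin.
rewrite (@nneseriesD1 _ _ l xpredT) //; apply: le_trans (leeDl _ _).
  by rewrite lee_wpmul2l ?lee_fin // (bigD1 k) //= leeDl // sume_ge0.
by apply: nneseries_ge0.
Qed.

End block_geometric.

Section sqnorm_qform.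
Variables (R : realType) (n : nat).
Implicit Types v w : 'cV[R]_n.

Lemma sqnorm_ge0 v : 0 <= sqnorm v.
Proof. by apply: sumr_ge0 => i _; rewrite sqr_ge0. Qed.

Lemma sqnorm_eq0 v : (sqnorm v == 0) = (v == 0).
Proof.
apply/idP/eqP => [|->]; last by rewrite /sqnorm big1 // => i _; rewrite mxE expr0n.
rewrite psumr_eq0 => [/allP v0|i _]; last exact: sqr_ge0.
apply/matrixP => i j; rewrite (ord1 j) mxE.
by apply/eqP; rewrite -sqrf_eq0; apply: v0; rewrite mem_index_enum.
Qed.

Lemma mulmx_tr_self v : v^T *m v = (sqnorm v)%:M.
Proof.
apply/matrixP => i j; rewrite (ord1 i) (ord1 j) !mxE /sqnorm.
by apply: eq_bigr => k _; rewrite !mxE expr2.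
Qed.

Lemma sqnorm_scale (a : R) w : sqnorm (a *: w) = a ^+ 2 * sqnorm w.
Proof. by rewrite /sqnorm mulr_sumr; apply: eq_bigr => i _; rewrite mxE exprMn. Qed.

Lemma qformZ (H : 'M[R]_n) (a : R) w : qform H (a *: w) = a ^+ 2 * qform H w.
Proof.
by rewrite /qform linearZ /= [(a *: w)^T]linearZ /= -!scalemxAl !mxE mulrA expr2.
Qed.

Lemma sqr_le_sqnorm w i : w i 0 ^+ 2 <= sqnorm w.
Proof. by rewrite /sqnorm (bigD1 i) //= lerDl sumr_ge0 // => k _; rewrite sqr_ge0. Qed.

Lemma qform_neq0 (H : 'M[R]_n) w : qform H w != 0 -> w != 0.
Proof. by apply: contraNneq => ->; rewrite /qform mulmx0 mxE. Qed.

End sqnorm_qform.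

Section reflection.
Variables (R : realType) (n : nat).
Implicit Types u w z : 'cV[R]_n.

Definition reflection z : 'M[R]_n := 1%:M - (2 / sqnorm z) *: (z *m z^T).

Lemma trmx_reflection z : (reflection z)^T = reflection z.
Proof. by rewrite /reflection linearB linearZ /= trmx1 trmx_mul trmxK. Qed.

Lemma reflection_invol z : reflection z *m reflection z = 1%:M.
Proof.
have zz : z *m z^T *m (z *m z^T) = sqnorm z *: (z *m z^T).
  by rewrite mulmxA -[z *m z^T *m z]mulmxA mulmx_tr_self mul_mx_scalar -scalemxAl.
rewrite /reflection mulmxBl mul1mx mulmxBr mulmx1 -scalemxAl -scalemxAr zz !scalerA.
have [->|s0] := eqVneq (sqnorm z) 0; first by rewrite invr0 !mulr0 !scale0r !subr0.
have -> : 2 / sqnorm z * (2 / sqnorm z) * sqnorm z = 2 * (2 / sqnorm z).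
  by rewrite -mulrA mulfVK // mulrC.
by apply/matrixP => i j; rewrite !mxE; ring.
Qed.

Lemma reflection_map u w : sqnorm u = sqnorm w -> reflection (u - w) *m w = u.
Proof.
move=> uw; set z := u - w; set d := \sum_i z i 0 * w i 0.
have zw : z^T *m w = d%:M.
  apply/matrixP => i j; rewrite (ord1 i) (ord1 j) !mxE.
  by apply: eq_bigr => k _; rewrite mxE.
have sd : sqnorm z = - 2 * d.
  have : sqnorm z + 2 * d = sqnorm u - sqnorm w.
    rewrite /sqnorm /d mulr_sumr -big_split -sumrB.
    by apply: eq_bigr => i _; rewrite /z !mxE /=; ring.
  by rewrite uw subrr; lra.
rewrite /reflection mulmxBl mul1mx -scalemxAl -mulmxA zw mul_mx_scalar scalerA.
have [s0|s0] := eqVneq (sqnorm z) 0.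
  have /eqP := s0; rewrite sqnorm_eq0 subr_eq0 => /eqP uw0.
  by rewrite s0 invr0 !mulr0 mul0r scale0r subr0 uw0.
apply/matrixP => i j; rewrite (ord1 j) !mxE.
have d0 : d != 0 by apply: contraNneq s0 => d0; rewrite sd d0 mulr0.
by rewrite sd; field.
Qed.

End reflection.

Section signed_columns.
Variables (R : realType) (n' : nat) (Q : 'M[R]_n'.+1).
Local Notation n := n'.+1.

Definition signed_col (d : nat) : 'cV[R]_n :=
  if (d < n)%N then col (inord d) Q else - col (inord (d - n)) Q.

Lemma sum_signed_colE (F : 'cV[R]_n -> R) :
  \sum_(d < n.*2) F (signed_col d) = \sum_(c < n) (F (col c Q) + F (- col c Q)).
Proof.
rewrite -addnn big_split_ord big_split /=; congr (_ + _); apply: eq_bigr => c _.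
  by rewrite /signed_col ltn_ord inord_val.
by rewrite /signed_col ltnNge leq_addr /= addKn inord_val.
Qed.

Lemma sum_signed_col i : \sum_(d < n.*2) signed_col d i 0 = 0.
Proof.
rewrite (sum_signed_colE (fun v => v i 0)) big1 // => c _.
by rewrite !mxE addrN.
Qed.

Lemma sum_signed_col_mul i j : Q *m Q^T = 1%:M ->
  \sum_(d < n.*2) signed_col d i 0 * signed_col d j 0 = 2 * (i == j)%:R.
Proof.
move=> /matrixP /(_ i j); rewrite !mxE => QQt.
rewrite (sum_signed_colE (fun v => v i 0 * v j 0)) -QQt mulr_sumr.
by apply: eq_bigr => c _; rewrite !mxE; ring.
Qed.

End signed_columns.

Section heavy_tailed_noise.
Variables (R : realType) (n' : nat) (v : 'cV[R]_n'.+1).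
Hypothesis v_neq0 : v != 0.
Local Notation n := n'.+1.
Local Notation N := n.*2.

Definition unit_dir : 'cV[R]_n := (Num.sqrt (sqnorm v))^-1 *: v.

Lemma sqnorm_unit_dir : sqnorm unit_dir = 1.
Proof.
rewrite sqnorm_scale exprVn sqr_sqrtr ?sqnorm_ge0 // mulVf //.
by rewrite sqnorm_eq0.
Qed.

Definition frame : 'M[R]_n := reflection (unit_dir - delta_mx 0 0).

Lemma frame_orthogonal : frame *m frame^T = 1%:M.
Proof. by rewrite trmx_reflection reflection_invol. Qed.

Lemma frame_col0 : col 0 frame = unit_dir.
Proof.
rewrite colE reflection_map // sqnorm_unit_dir /sqnorm (bigD1 0) //= big1 => [|i i0].
  by rewrite !mxE eqxx expr1n addr0.
by rewrite mxE (negbTE i0) expr0n.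
Qed.

Definition noise (m : nat) : 'cV[R]_n := 2 ^+ (m %/ N) *: signed_col frame (m %% N).

Definition noise_var : R := 7 / (4 * n%:R).

Lemma noise_var_gt0 : 0 < noise_var.
Proof. by rewrite divr_gt0 // mulr_gt0 // ltr0n. Qed.

Lemma noise_white : white_noise (block_geometric R n'.*2.+1) noise noise_var.
Proof.
have mean2 : series (fun l => geom_weight R l * 2 ^+ l) @ \oo --> (7 / (8 - 2) : R).
  by apply: geom_weight_series; rewrite ger0_norm //; lra.
have mean4 : series (fun l => geom_weight R l * 4 ^+ l) @ \oo --> (7 / (8 - 4) : R).
  by apply: geom_weight_series; rewrite ger0_norm //; lra.
pose D i d := signed_col frame d i 0.
have noiseE i : (fun m => (noise m i 0)%:E) =
    (fun m => (2 ^+ (m %/ N)%N * D i (m %% N)%N)%:E).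
  by apply/funext => m; rewrite mxE.
have noise2E i j : (fun m => (noise m i 0 * noise m j 0)%:E) =
    (fun m => (4 ^+ (m %/ N)%N * (D i (m %% N)%N * D j (m %% N)%N))%:E).
  apply/funext => m; rewrite !mxE (_ : 4 = 2 * 2) ?exprMn -?natrM //.
  by rewrite /D; congr EFin; ring.
split=> [i //|]; split=> [i|].
  by rewrite noiseE; apply: (@block_geometric_integrable R n'.*2.+1 _ (D i) _ _ mean2).
split=> [i|i j].
  rewrite noiseE (@integral_block_geometric R n'.*2.+1 _ (D i) _ _ mean2) //.
  by rewrite sum_signed_col mulr0 mul0r.
pose D2 d := D i d * D j d.
rewrite noise2E; split.
  by apply: (@block_geometric_integrable R n'.*2.+1 _ D2 _ _ mean4).
rewrite (@integral_block_geometric R n'.*2.+1 _ D2 _ _ mean4) //.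
rewrite sum_signed_col_mul ?frame_orthogonal // /noise_var.
have n0 : n%:R != 0 :> R by rewrite pnatr_eq0.
case: eqP => _; congr EFin; rewrite -[n'.*2.+2]/(n.*2) -mul2n natrM /=.
  by rewrite mulr1; field.
by rewrite !mulr0 mul0r.
Qed.

Lemma noise_block l (d : 'I_N) : noise (l * N + d) = 2 ^+ l *: signed_col frame d.
Proof. by rewrite /noise divnMDl // modnMDl divn_small // modn_small // addn0. Qed.

Lemma signed_col_frame0 : signed_col frame 0 = unit_dir.
Proof.
rewrite /signed_col /= -frame_col0; congr col.
by apply: val_inj; rewrite /= inordK.
Qed.

Lemma signed_col_frame_n : signed_col frame n = - unit_dir.
Proof.
rewrite /signed_col ltnn subnn -frame_col0; congr (- col _ _).
by apply: val_inj; rewrite /= inordK.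
Qed.

End heavy_tailed_noise.

Section infinite_risk.
Variables (R : realType) (n' k : nat) (A : 'M[R]_(k, n'.+1)).
Variables (H : 'I_k -> 'M[R]_n'.+1) (j : 'I_k) (v : 'cV[R]_n'.+1).
Local Notation n := n'.+1.
Local Notation N := n.*2.
Local Notation u := (unit_dir v).
Local Notation alpha := ((A *m u) j 0).
Local Notation gamma := (qform (H j) u).
Hypothesis Hv : qform (H j) v != 0.
Let v_neq0 : v != 0 := qform_neq0 Hv.

Lemma risk_ge_block l (d : 'I_N) (s : R) :
  signed_col (frame v) d = s *: u -> s ^+ 2 = 1 -> 0 <= s * (alpha * gamma) ->
  16 ^+ l * gamma ^+ 2 <= sqnorm (betahat A H (noise v (l * N + d))).
Proof.
move=> du s2 sag; apply: le_trans (sqr_le_sqnorm _ j).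
rewrite noise_block du scalerA /betahat -scalemxAr.
rewrite mxE [X in _ + X]mxE [X in X + _]mxE qformZ.
set r : R := 2 ^+ l; set x := r * s * alpha; set y := r ^+ 2 * gamma.
have -> : (r * s) ^+ 2 * gamma = y by rewrite exprMn s2 mulr1.
have -> : 16 ^+ l * gamma ^+ 2 = y ^+ 2.
  by rewrite /y /r exprMn -!exprM (_ : 16 = 2 ^+ 4) -?natrX // -expnM mulnC -mulnA.
have xy : 0 <= x * y.
  rewrite (_ : x * y = r ^+ 3 * (s * (alpha * gamma))); last by rewrite /x /y; ring.
  by rewrite mulr_ge0 // !exprn_ge0.
nra.
Qed.

Lemma sign_aligned_block : exists (d : 'I_N) (s : R),
  [/\ signed_col (frame v) d = s *: u, s ^+ 2 = 1 & 0 <= s * (alpha * gamma)].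
Proof.
have [ag|ag] := lerP 0 (alpha * gamma).
  exists ord0, 1; split; rewrite ?scale1r ?mul1r ?expr1n //.
  exact: signed_col_frame0 v_neq0.
have nN : (n < N)%N by rewrite -addnn -addn1 leq_add2l.
exists (Ordinal nN), (-1); rewrite scaleN1r sqrrN expr1n mulN1r oppr_ge0 ltW //.
by split => //; exact: signed_col_frame_n v_neq0.
Qed.

Lemma risk_not_finite :
  ~ (\int[block_geometric R n'.*2.+1]_t (sqnorm (betahat A H (noise v t)))%:E < +oo)%E.
Proof.
move=> fin.
have gamma0 : gamma != 0.
  rewrite qformZ mulf_neq0 // expf_neq0 // invr_eq0 gt_eqF // sqrtr_gt0.
  by rewrite lt_def sqnorm_eq0 v_neq0 sqnorm_ge0.
have [d [s [du s2 sag]]] := sign_aligned_block.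
set I := (\int[_]_t _)%E in fin.
have I_fin : I \is a fin_num.
  by rewrite ge0_fin_numE // integral_ge0 // => t _; rewrite lee_fin sqnorm_ge0.
have bound l : 7 / 8 * gamma ^+ 2 / N%:R * 2 ^+ l <= fine I.
  rewrite -lee_fin fineK //.
  apply: le_trans (@block_geometric_ge_term R n'.*2.+1
    (fun t => (sqnorm (betahat A H (noise v t)))%:E) l d (fun t => sqnorm_ge0 _)).
  rewrite -EFinM lee_fin.
  have -> : 7 / 8 * gamma ^+ 2 / N%:R * 2 ^+ l =
            geom_weight R l / N%:R * (16 ^+ l * gamma ^+ 2).
    transitivity (geom_weight R l * 16 ^+ l * gamma ^+ 2 / N%:R); last by ring.
    by rewrite geom_weight_mul16; ring.
  by rewrite ler_wpM2l ?divr_ge0 ?geom_weight_ge0 //; exact: risk_ge_block du s2 sag.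
have c0 : 0 < 7 / 8 * gamma ^+ 2 / N%:R.
  by rewrite !divr_gt0 // ?ltr0n // mulr_gt0 // exprn_even_gt0 //.
have [m] := exists_gt_pow2 (fine I) c0.
by rewrite ltNge bound.
Qed.

End infinite_risk.

Theorem propositionB1 (R : realType) (n k : nat) (X : 'M[R]_(n, k))
  (A : 'M[R]_(k, n)) (H : 'I_k -> 'M[R]_n) :
  (0 < k)%N -> (k < n)%N -> \rank X = k ->
  A *m X = 1%:M ->
  (forall j, \tr (H j) = 0) ->
  (forall j, X^T *m H j *m X = 0) ->
  (forall (d : measure_display) (T : measurableType d) (P : probability T R)
          (e : T -> 'cV[R]_n) (s2 : R) (beta : 'cV[R]_k),
      0 < s2 -> white_noise P e s2 ->
      (\int[P]_t (sqnorm (betahat A H (X *m beta + e t)))%:E < +oo)%E) ->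
  exists B : 'M[R]_(k, n), forall y : 'cV[R]_n, betahat A H y = B *m y.
Proof.
case: n X A H => [|n'] X A H _ kn _ _ _ _ risk_finite; first by rewrite ltn0 in kn.
have qform_eq0 j (v : 'cV[R]_n'.+1) : qform (H j) v = 0.
  apply/eqP/negPn/negP => Hv; apply: (@risk_not_finite _ _ _ A _ _ _ Hv).
  have := risk_finite _ _ _ _ _ 0 (noise_var_gt0 R n') (noise_white v).
  by under eq_integral do rewrite mulmx0 add0r.
exists A => y; rewrite /betahat (_ : \col_j _ = 0) ?addr0 //.
by apply/matrixP => j i; rewrite !mxE qform_eq0.
Qed.
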